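(* Let $m\geq 1$ and $n\geq 3$ be integers. For all vertices $i,j$ of the oriented Dutch windmill graph $D^m_n$, the number of walks in $D^m_n$ of length $2n-1$ from $i$ to $j$ is exactly $m$ times the number of walks of length $n-1$ from $i$ to $j$.
   Context: For integers $m\geq 1$, $n\geq 3$, the oriented Dutch windmill graph $D^m_n$ is the directed graph with vertex set $V=\{1,2,\ldots,m(n-1)+1\}$ whose directed edges $(a,b)$ are exactly: $(1,(k-1)(n-1)+2)$ for $k\in\{1,\ldots,m\}$; $((k-1)(n-1)+i,(k-1)(n-1)+i+1)$ for $k\in\{1,\ldots,m\}$ and $i\in\{2,\ldots,n-1\}$; and $((k-1)(n-1)+n,1)$ for $k\in\{1,\ldots,m\}$. A walk is a sequence of vertices $\langle v_1,\ldots,v_r\rangle$ in which each $(v_t,v_{t+1})$ is an edge; its length is $r-1$; walks are distinct when they are distinct sequences. *)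

From mathcomp Require Import all_boot.
Unset Printing Implicit Defensive.

Definition dw_nverts (m n : nat) : nat := m * (n - 1) + 1.

Definition dw_vertex (m n v : nat) : bool := (1 <= v) && (v <= dw_nverts m n).

Definition dw_edge (m n : nat) (a b : nat) : bool :=
  has (fun k =>
     [|| (a == 1) && (b == (k - 1) * (n - 1) + 2),
         has (fun i => (a == (k - 1) * (n - 1) + i) && (b == (k - 1) * (n - 1) + i + 1))
             (iota 2 (n - 2))
       | (a == (k - 1) * (n - 1) + n) && (b == 1)]) (iota 1 m).

(* We enumerate candidate sequences as
   (L+1)-tuples of 'I_(N+1), N = number of vertices, so all labels 1..N fit. *)
Definition dw_walk (m n L i j : nat) (w : L.+1.-tuple 'I_(dw_nverts m n).+1) : bool :=
  all (fun v : 'I_(dw_nverts m n).+1 => dw_vertex m n v) w &&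
  (nat_of_ord (thead w) == i) && (nat_of_ord (last (thead w) w) == j) &&
  path (fun a b : 'I_(dw_nverts m n).+1 => dw_edge m n a b) (thead w) (behead w).

Definition dw_nwalks (m n L i j : nat) : nat :=
  #|[pred w : L.+1.-tuple 'I_(dw_nverts m n).+1 | @dw_walk m n L i j w]|.

From mathcomp Require Import all_boot zify.

(* Every vertex other than the hub 1 has a single out-neighbour, so a walk
   starting on a blade is forced along it and reaches the hub after a fixed
   number t <= n - 1 of steps, while from the hub there is one choice per blade,
   after which the walk is back at the hub exactly n steps later.  Hence the
   number of walks of length L + n from the hub is m times the number of length
   L, and for a vertex at distance t from the hub the same holds once L >= t,
   by first walking the t forced steps; L = n - 1 is the case of the theorem. *)

Lemma big_tuple_cons (R : Type) (idx : R) (op : Monoid.com_law idx)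
    (T : finType) (L : nat) (F : L.+2.-tuple T -> R) :
  \big[op/idx]_(w : L.+2.-tuple T) F w =
  \big[op/idx]_(x : T) \big[op/idx]_(w : L.+1.-tuple T) F [tuple of x :: w].
Proof.
rewrite pair_bigA (reindex (fun p : T * L.+1.-tuple T => [tuple of p.1 :: p.2])) //=.
exists (fun w : L.+2.-tuple T => (thead w, [tuple of behead w])) => [[x w] _|w _].
  by rewrite theadE; congr pair; apply: val_inj.
by rewrite [RHS]tuple_eta; apply: val_inj.
Qed.

Lemma eq_mulnD_lt d c c' r r' : r < d -> r' < d ->
  c * d + r = c' * d + r' -> c = c' /\ r = r'.
Proof.
move=> rd r'd E; have d0 : 0 < d by apply: leq_ltn_trans rd.
have := congr1 (divn^~ d) E; have := congr1 (modn^~ d) E => /=.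
by rewrite !modnMDl !modn_small // !divnMDl // !divn_small // !addn0.
Qed.

Section Walks.
Variables (m n j : nat).
Local Notation K := (dw_nverts m n).+1.
Local Notation N L v := (dw_nwalks m n L v j).

Lemma dw_nwalksE L i :
  N L i = \sum_(w : L.+1.-tuple 'I_K) dw_walk m n L i j w.
Proof.
by rewrite /dw_nwalks -sum1_card big_mkcond; apply: eq_bigr => w _; rewrite inE.
Qed.

Lemma dw_walk_cons L i (x : 'I_K) (w : L.+1.-tuple 'I_K) :
  dw_walk m n L.+1 i j [tuple of x :: w] =
  [&& dw_vertex m n x, x == i :> nat, dw_edge m n x (thead w) &
      dw_walk m n L (thead w) j w].
Proof.
rewrite /dw_walk; case/tupleP: w => y w; rewrite !theadE /= eqxx andbT.
by case: (dw_vertex m n x) (x == i :> nat) (dw_edge m n x y) => [] [] [];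
  rewrite ?andbF ?andbT.
Qed.

Lemma dw_walk_thead L y (w : L.+1.-tuple 'I_K) :
  dw_walk m n L y j w = (thead w == y :> nat) && dw_walk m n L (thead w) j w.
Proof.
by rewrite /dw_walk; case: (thead w =P y :> nat); rewrite ?eqxx ?andbF ?andbT.
Qed.

Lemma dw_nwalksS L i : dw_vertex m n i ->
  N L.+1 i = \sum_(y < K | dw_edge m n i y) N L y.
Proof.
move=> vi; have iK : i < K by case/andP: vi.
rewrite dw_nwalksE big_tuple_cons (bigD1 (Ordinal iK)) //=.
rewrite [X in _ + X]big1 ?addn0; last first.
  move=> x /negbTE xi; apply: big1 => w _; rewrite dw_walk_cons.
  by rewrite -val_eqE /= in xi; rewrite xi andbF.
under eq_bigr do rewrite dw_walk_cons vi eqxx /=.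
under [RHS]eq_bigr do rewrite dw_nwalksE.
rewrite exchange_big /=; apply: eq_bigr => w _.
rewrite big_mkcond (bigD1 (thead w)) //= [X in _ + X]big1 ?addn0 => [|y yw].
  by rewrite dw_walk_thead eqxx; case: dw_edge.
by rewrite dw_walk_thead val_eqE eq_sym (negbTE yw); case: dw_edge.
Qed.

Lemma dw_nwalksS_seq L i (s : seq nat) :
  dw_vertex m n i -> (forall y, dw_edge m n i y = (y \in s)) ->
  uniq s -> all (fun y => y < K) s ->
  N L.+1 i = \sum_(y <- s) N L y.
Proof.
move=> vi ei us sK; rewrite dw_nwalksS // -(big_mkord (dw_edge m n i) (fun y => N L y)).
rewrite -big_filter; apply: perm_big; apply: uniq_perm => [||y].
- by rewrite filter_uniq // iota_uniq.
- exact: us.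
rewrite mem_filter mem_iota ei /=; case: (boolP (y \in s)) => //= ys.
by move/allP: sK => /(_ y ys).
Qed.

Lemma dw_nwalksS_pred1 L i y :
  dw_vertex m n i -> (forall z, dw_edge m n i z = (z == y)) -> y < K ->
  N L.+1 i = N L y.
Proof.
move=> vi ei yK.
by rewrite (@dw_nwalksS_seq L i [:: y]) ?big_seq1 /= ?yK // => z; rewrite ei inE.
Qed.

End Walks.

(* With n = d.+1, [blade_vertex d c p] is the paper's vertex (k-1)(n-1)+i for
   k = c+1 and i = p+1: blade c is the path p = 1, ..., d whose last vertex
   points back to the hub 1. *)
Definition blade_vertex (d c p : nat) : nat := c * d + p + 1.

Lemma dw_vertex1 m n : dw_vertex m n 1.
Proof. by rewrite /dw_vertex /dw_nverts leq_addl. Qed.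

Section Windmill.
Variables (m d : nat).
Hypothesis d_gt0 : 0 < d.

Lemma dw_nverts_succ : dw_nverts m d.+1 = m * d + 1.
Proof. by rewrite /dw_nverts subn1. Qed.

Lemma dw_vertex_blade c p :
  c < m -> 0 < p <= d -> dw_vertex m d.+1 (blade_vertex d c p).
Proof.
by move=> c_m p_d; rewrite /dw_vertex dw_nverts_succ /blade_vertex; apply/andP; nia.
Qed.

Lemma dw_vertexP v : dw_vertex m d.+1 v ->
  v = 1 \/ exists c p, [/\ c < m, 0 < p <= d & v = blade_vertex d c p].
Proof.
rewrite /dw_vertex dw_nverts_succ => /andP[v_gt0 v_le].
have [->|v_ne1] := eqVneq v 1; [by left | right].
exists ((v - 2) %/ d), ((v - 2) %% d).+1; split.
- by rewrite ltn_divLR //; lia.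
- by rewrite ltn_pmod.
- by rewrite /blade_vertex; have := divn_eq (v - 2) d; lia.
Qed.

Lemma dw_edge_hub y :
  dw_edge m d.+1 1 y = (y \in [seq blade_vertex d c 1 | c <- iota 0 m]).
Proof.
rewrite /blade_vertex /dw_edge subSS subn0.
apply/hasP/mapP => [[k]|[c]]; rewrite mem_iota.
- move=> k_m; case/or3P.
  + by move=> /andP[_ /eqP ->]; exists (k - 1); rewrite ?mem_iota; lia.
  + by case/hasP=> i; rewrite mem_iota => i_d /andP[/eqP a1 _]; nia.
  + by move=> /andP[/eqP a1 _]; lia.
- move=> c_m ->; exists c.+1; rewrite ?mem_iota; first lia.
  by rewrite subn1 /= -addnA eqxx.
Qed.

Lemma dw_edge_blade c p y : c < m -> 0 < p < d ->
  dw_edge m d.+1 (blade_vertex d c p) y = (y == blade_vertex d c p.+1).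
Proof.
move=> c_m p_d; rewrite /blade_vertex /dw_edge subSS subn0; apply/hasP/eqP => [[k]|->].
- rewrite mem_iota => k_m; case/or3P.
  + by move=> /andP[/eqP a1 _]; nia.
  + case/hasP=> i; rewrite mem_iota => i_d /andP[/eqP a_i /eqP ->].
    have [-> ->] : c = k - 1 /\ p = i - 1 by apply: (@eq_mulnD_lt d); nia.
    nia.
  + move=> /andP[/eqP a_end _].
    have [_ p0] : c = k /\ p = 0 by apply: (@eq_mulnD_lt d); nia.
    nia.
- exists c.+1; rewrite ?mem_iota; first nia.
  apply/or3P/Or32/hasP; exists p.+1; rewrite ?mem_iota; first nia.
  by rewrite subn1 /=; apply/andP; split; apply/eqP; lia.
Qed.

Lemma dw_edge_blade_last c y : c < m ->
  dw_edge m d.+1 (blade_vertex d c d) y = (y == 1).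
Proof.
move=> c_m; rewrite /blade_vertex /dw_edge subSS subn0; apply/hasP/eqP => [[k]|->].
- rewrite mem_iota => k_m; case/or3P.
  + by move=> /andP[/eqP a1 _]; nia.
  + case/hasP=> i; rewrite mem_iota => i_d /andP[/eqP a_i _].
    have [_ di] : c = k - 1 /\ d - 1 = i - 2 by apply: (@eq_mulnD_lt d); nia.
    nia.
  + by move=> /andP[_ /eqP].
- exists c.+1; rewrite ?mem_iota; first nia.
  by apply/or3P/Or33; rewrite subn1 /= addn1 addnS !eqxx.
Qed.

Variable j : nat.
Local Notation N L v := (dw_nwalks m d.+1 L v j).

Lemma dw_nwalks_blade_step L c p : c < m -> 0 < p < d ->
  N L.+1 (blade_vertex d c p) = N L (blade_vertex d c p.+1).
Proof.
move=> c_m p_d; apply: dw_nwalksS_pred1 => [|z|].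
- by apply: dw_vertex_blade => //; lia.
- exact: dw_edge_blade.
- by rewrite dw_nverts_succ /blade_vertex; nia.
Qed.

Lemma dw_nwalks_blade_last L c : c < m -> N L.+1 (blade_vertex d c d) = N L 1.
Proof.
move=> c_m; apply: dw_nwalksS_pred1 => [|z|].
- by apply: dw_vertex_blade => //; lia.
- exact: dw_edge_blade_last.
- by rewrite dw_nverts_succ; lia.
Qed.

Lemma dw_nwalks_blade L c p : c < m -> 0 < p <= d ->
  N (L + (d - p).+1) (blade_vertex d c p) = N L 1.
Proof.
move=> c_m p_d; rewrite addnS; have: p + (d - p) = d by lia.
move: (d - p) => e; elim: e p p_d => [|e IHe] p p_d pe.
  by move: pe; rewrite !addn0 => ->; rewrite dw_nwalks_blade_last.
by rewrite dw_nwalks_blade_step ?addnS ?IHe //; lia.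
Qed.

Lemma dw_nwalks_hub L : N (L + d.+1) 1 = m * N L 1.
Proof.
have blade_inj : injective (fun c => blade_vertex d c 1).
  by move=> a b /eqP; rewrite /blade_vertex !eqn_add2r eqn_mul2r eqn0Ngt d_gt0 => /eqP.
rewrite addnS (dw_nwalksS_seq _ _ _ _ _ _ (dw_vertex1 _ _) dw_edge_hub).
- rewrite big_map (eq_big_seq (fun=> N L 1)) => [|c]; last first.
    rewrite mem_iota => c_m.
    by rewrite -(dw_nwalks_blade L c 1) ?subn1 ?prednK //; lia.
  by rewrite big_const_seq count_predT size_iota iter_addn_0 mulnC.
- by rewrite map_inj_uniq ?iota_uniq.
- apply/allP => y /mapP[c]; rewrite mem_iota dw_nverts_succ /blade_vertex.
  by move=> c_m ->; nia.
Qed.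

Lemma dw_nwalks_period L v : d <= L -> dw_vertex m d.+1 v ->
  N (L + d.+1) v = m * N L v.
Proof.
move=> d_L /dw_vertexP[->|[c [p [c_m p_d ->]]]]; first exact: dw_nwalks_hub.
have t_L : (d - p).+1 <= L by lia.
rewrite -(subnK t_L) -addnA (addnC _ d.+1) addnA !dw_nwalks_blade //.
exact: dw_nwalks_hub.
Qed.

End Windmill.

Theorem proposition2p7 (m n i j : nat) :
  1 <= m -> 3 <= n -> dw_vertex m n i -> dw_vertex m n j ->
  dw_nwalks m n (2 * n - 1) i j = m * dw_nwalks m n (n - 1) i j.
Proof.
case: n => [|d] // _ n_ge3 vi _.
rewrite (_ : 2 * d.+1 - 1 = d + d.+1); last lia.
by rewrite subn1 dw_nwalks_period //; lia.
Qed.
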